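(* Let $\mathcal{H}$ be a Hilbert space of dimension $d$ with $2 \le d < \infty$, let $X$ be a set with $d^2$ elements, and let $\mathbf{U}=\{U_x : x\in X\}$ and $\mathbf{U}'=\{U'_x : x \in X\}$ be unitary bases for $\mathcal{H}$. Then the following are equivalent: (i) $\mathbf{U}$ is equivalent to $\mathbf{U}'$; (ii) for some $\mathbf{U}$-associated tag $\mathbf{T}=(x_0,U_{x_0},\mathbf{W})$ and some $\mathbf{U}'$-associated tag $\mathbf{T}'=(x_0',U'_{x_0'},\mathbf{W}')$, the unitary system $\mathbf{W}$ is collectively unitarily equivalent to $\mathbf{W}'$; (iii) for each $\mathbf{U}$-associated tag $\mathbf{T}=(x_0,U_{x_0},\mathbf{W})$ there is a $\mathbf{U}'$-associated tag $\mathbf{T}'=(x_0',U'_{x_0'},\mathbf{W}')$ such that $\mathbf{W}$ is collectively unitarily equivalent to $\mathbf{W}'$.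
   Context: $\mathcal{U}(\mathcal{H})$ denotes the unitaries on $\mathcal{H}$. A unitary basis (UB) is a family $\mathbf{U}=\{U_x: x\in X\}$ of unitaries on $\mathcal{H}$ with $\operatorname{tr}(U_x^*U_y)=d\,\delta_{xy}$ for $x,y\in X$. Two unitary bases $\mathbf{U}$, $\mathbf{U}'$ are equivalent if there exist unitaries $V_1,V_2$ on $\mathcal{H}$ and a bijection (relabelling) $x\mapsto x'$ of $X$ such that $U'_{x'}=V_1U_xV_2$ for all $x\in X$. For $x_0\in X$, the $\mathbf{U}$-associated tag at $x_0$ is the triple $(x_0,U_{x_0},\mathbf{W})$ where $\mathbf{W}=\{W_x=U_{x_0}^*U_x : x\in X, x\neq x_0\}$ (a set of unitaries). For subsets $\mathcal{F},\mathcal{G}$ of bounded operators on $\mathcal{H}$, $\mathcal{F}$ is collectively unitarily equivalent (CUE) to $\mathcal{G}$ if there is a unitary $V$ on $\mathcal{H}$ with $\mathcal{G}=\{V^*AV : A\in\mathcal{F}\}$. *)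

(* The Hilbert space H of dimension d is modelled as C^d with
   C = R[i] (complex numbers over a realType R); operators are 'M[C]_d. *)
From HB Require Import structures.
From mathcomp Require Import all_boot all_order all_algebra.
From mathcomp Require Import reals complex.
Set Implicit Arguments. Unset Strict Implicit. Unset Printing Implicit Defensive.
Import Order.TTheory GRing.Theory Num.Theory.
Local Open Scope ring_scope.

Section Defs.
Variable C : numClosedFieldType.
Variable d : nat.

Definition adjmx (A : 'M[C]_d) : 'M[C]_d := (map_mx Num.conj A)^T.

Definition unitary (U : 'M[C]_d) : Prop :=
  adjmx U *m U = 1%:M /\ U *m adjmx U = 1%:M.

Definition unitary_basis (X : finType) (U : X -> 'M[C]_d) : Prop :=
  (forall x, unitary (U x)) /\
  (forall x y, \tr (adjmx (U x) *m U y) = d%:R * (x == y)%:R).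

Definition ub_equiv (X : finType) (U U' : X -> 'M[C]_d) : Prop :=
  exists (V1 V2 : 'M[C]_d) (s : X -> X),
    [/\ unitary V1, unitary V2, bijective s &
        forall x, U' (s x) = V1 *m U x *m V2].

Definition tagW (X : finType) (U : X -> 'M[C]_d) (x0 : X) : 'M[C]_d -> Prop :=
  fun A => exists x, x != x0 /\ A = adjmx (U x0) *m U x.

Definition CUE (F G : 'M[C]_d -> Prop) : Prop :=
  exists V : 'M[C]_d, unitary V /\
    (forall B, G B <-> exists A, F A /\ B = adjmx V *m A *m V).
End Defs.

(* Write A' for the adjoint of A.  Equivalence of bases transports tags: if
   U'_(s x) = V1 U_x V2 then U'_(s x0)' U'_(s x) = V2' (U_x0' U_x) V2, so W and
   W' are collectively unitarily equivalent through V2.  Conversely, if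
   W' = V' W V, then each U_x is sent by A |-> (U'_x0' V' U_x0') A V to some
   U'_y; the induced map x |-> y is injective because the U_x are pairwise
   distinct (their Gram traces differ when d > 0), hence a bijection of the
   finite index set. *)
From HB Require Import structures.
From mathcomp Require Import all_boot all_order all_algebra.
From mathcomp Require Import reals complex.
Set Implicit Arguments. Unset Strict Implicit. Unset Printing Implicit Defensive.
Import Order.TTheory GRing.Theory Num.Theory.
Local Open Scope ring_scope.

Section UnitaryBases.
Variable C : numClosedFieldType.
Variable d : nat.
Implicit Types A B V W : 'M[C]_d.

Lemma adjmxM A B : adjmx (A *m B) = adjmx B *m adjmx A.
Proof. by rewrite /adjmx map_mxM trmx_mul. Qed.

Lemma adjmxK A : adjmx (adjmx A) = A.
Proof. by apply/matrixP=> i j; rewrite /adjmx !mxE conjCK. Qed.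

Lemma unitary_adj V : unitary V -> unitary (adjmx V).
Proof. by case=> h1 h2; rewrite /unitary adjmxK. Qed.

Lemma unitaryM V W : unitary V -> unitary W -> unitary (V *m W).
Proof.
case=> hV1 hV2 [hW1 hW2]; split; rewrite adjmxM.
  by rewrite -!mulmxA (mulmxA (adjmx V) V) hV1 mul1mx hW1.
by rewrite -!mulmxA (mulmxA W) hW2 mul1mx hV2.
Qed.

Lemma unitary_conjK A V W : unitary V -> unitary W ->
  adjmx V *m (V *m A *m W) *m adjmx W = A.
Proof.
case=> hV _ [_ hW]; rewrite -!mulmxA (mulmxA (adjmx V)) hV mul1mx.
by rewrite hW mulmx1.
Qed.

Lemma adjmx_mulmx_conj V W A B : unitary V ->
  adjmx (V *m A *m W) *m (V *m B *m W) = adjmx W *m (adjmx A *m B) *m W.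
Proof.
case=> hV _; rewrite !adjmxM -!mulmxA (mulmxA (adjmx V) V) hV mul1mx.
by rewrite !mulmxA.
Qed.

Variable X : finType.
Implicit Types U : X -> 'M[C]_d.

Lemma unitary_basis_inj U : (0 < d)%N -> unitary_basis U -> injective U.
Proof.
move=> d_gt0 [_ trU] x y eU; apply/eqP; apply: contraTT isT => neq_xy.
have := trU x y; rewrite -eU trU eqxx (negPf neq_xy) mulr1 mulr0.
by move/eqP; rewrite pnatr_eq0 eqn0Ngt d_gt0.
Qed.

Lemma ub_equiv_CUE_tagW U U' : ub_equiv U U' ->
  forall x0, exists x0', CUE (tagW U x0) (tagW U' x0').
Proof.
case=> V1 [V2] [s] [uV1 uV2 bij_s hU] x0.
have [s' ss' s's] := bij_s.
have tagW_s x : adjmx (U' (s x0)) *m U' (s x)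
    = adjmx V2 *m (adjmx (U x0) *m U x) *m V2.
  by rewrite !hU adjmx_mulmx_conj.
exists (s x0), V2; split=> // B; split.
  case=> y [neq_y ->]; exists (adjmx (U x0) *m U (s' y)); split.
    by exists (s' y); split=> //; apply: contra neq_y => /eqP <-; rewrite s's.
  by rewrite -tagW_s s's.
case=> A [[x [neq_x ->]] ->]; exists (s x); split; last by rewrite tagW_s.
by rewrite (bij_eq bij_s).
Qed.

Lemma CUE_tagW_ub_equiv U U' x0 x0' :
  unitary (U x0) -> unitary (U' x0') -> injective U ->
  CUE (tagW U x0) (tagW U' x0') -> ub_equiv U U'.
Proof.
move=> uU0 uU'0 inj_U [V [uV cueV]].
pose V1 := U' x0' *m adjmx V *m adjmx (U x0).
have uV1 : unitary V1.
  by rewrite /V1; do ![apply: unitaryM | apply: unitary_adj].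
have /fin_all_exists[s hs] x : exists y, U' y = V1 *m U x *m V.
  have [->|neq_x] := eqVneq x x0.
    exists x0'; rewrite /V1 -!mulmxA (mulmxA (adjmx (U x0))) uU0.1 mul1mx.
    by rewrite uV.1 mulmx1.
  have [|y [_ hy]] := (cueV (adjmx V *m (adjmx (U x0) *m U x) *m V)).2.
    by exists (adjmx (U x0) *m U x); split=> //; exists x.
  exists y; rewrite -[U' y]mul1mx -uU'0.2 -(mulmxA (U' x0')) -hy.
  by rewrite /V1 !mulmxA.
have inj_s : injective s.
  move=> x y e; apply: inj_U.
  by rewrite -(unitary_conjK (U x) uV1 uV) -(unitary_conjK (U y) uV1 uV) -!hs e.
by exists V1, V, s; split=> //; apply: injF_bij.
Qed.

End UnitaryBases.

Theorem theorem2p7 (R : realType) (d : nat) (X : finType)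
    (U U' : X -> 'M[R[i]]_d) :
  (2 <= d)%N -> #|X| = (d ^ 2)%N ->
  unitary_basis U -> unitary_basis U' ->
  (ub_equiv U U' <->
     exists x0 x0' : X, CUE (tagW U x0) (tagW U' x0')) /\
  (ub_equiv U U' <->
     forall x0 : X, exists x0' : X, CUE (tagW U x0) (tagW U' x0')).
Proof.
move=> d_ge2 card_X bU bU'.
have d_gt0 : (0 < d)%N by apply: leq_trans d_ge2.
have [x0 _] : exists x0 : X, true.
  by apply/card_gt0P; rewrite card_X expn_gt0 d_gt0.
have ii_i : (exists x0 x0' : X, CUE (tagW U x0) (tagW U' x0')) ->
    ub_equiv U U'.
  case=> y0 [y0']; apply: CUE_tagW_ub_equiv.
  - exact: bU.1.
  - exact: bU'.1.
  - exact: unitary_basis_inj.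
split; split=> [eqU|]; try exact: ii_i.
- by have [x0' ?] := ub_equiv_CUE_tagW eqU x0; exists x0, x0'.
- exact: ub_equiv_CUE_tagW.
- by move=> iii; have [x0' ?] := iii x0; apply: ii_i; exists x0, x0'.
Qed.
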